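(* Suppose $\min\{d_1,\dots,d_{L-1}\}\ge d_{\min}$, and: if $L=2$, $\lambda\ne y_i^2$ for all $i\in[r_Y]$; if $L\ge3$, $\lambda\ne y_i^{2(L-1)}\big((\tfrac{L-2}{L})^{\frac{L}{2(L-1)}}+(\tfrac{L}{L-2})^{\frac{L-2}{2(L-1)}}\big)^{-2(L-1)}$ for all $i\in[r_Y]$. Let $\mu:=\min\{\min_{i\in[r_Y]}|\lambda-y_i^2|,\ \lambda\}$ and $$(\epsilon_0,\kappa_0)=\begin{cases}\Big(\big(\tfrac{\sqrt\lambda\,\mu}{2(\sqrt\lambda+y_1)}\big)^{1/2},\ \tfrac{2(\sqrt\lambda+y_1)}{\sqrt\lambda\,\mu}\Big),&L=2,\\[1ex] \Big(\min\big\{(\lambda/3)^{1/(2L-2)},\ (\sqrt\lambda/(3y_1))^{1/(L-2)}\big\},\ \tfrac{3\sqrt L}{2\lambda}\Big),&L\ge3.\end{cases}$$ Then for all $\bm W=(\bm W_1,\dots,\bm W_L)$ with $(\sum_l\|\bm W_l\|_F^2)^{1/2}\le\epsilon_0$, $$\Big(\sum_{l=1}^L\|\bm W_l\|_F^2\Big)^{1/2}\le\kappa_0\|\nabla G(\bm W)\|_F.$$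
   Context: Let $L\ge2$, $d_0,\dots,d_L$ positive integers, $d_{\min}=\min\{d_0,d_L\}$, $\lambda>0$, $y_1\ge\dots\ge y_{d_{\min}}\ge0$, $r_Y$ the number of positive $y_i$, and $\bm Y\in\mathbb R^{d_L\times d_0}$ the matrix with $(i,i)$ entry $y_i$ for $i\le d_{\min}$ and zeros elsewhere. For $\bm W=(\bm W_1,\dots,\bm W_L)$, $\bm W_l\in\mathbb R^{d_l\times d_{l-1}}$, $G(\bm W)=\|\bm W_L\cdots\bm W_1-\sqrt\lambda\bm Y\|_F^2+\lambda\sum_l\|\bm W_l\|_F^2$, and $\|\nabla G(\bm W)\|_F=(\sum_l\|\nabla_{\bm W_l}G(\bm W)\|_F^2)^{1/2}$. (If $y_1=0$ and $L\ge3$, the second term in the minimum defining $\epsilon_0$ is interpreted as $+\infty$.) *)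

From HB Require Import structures.
From mathcomp Require Import all_boot all_order all_algebra.
From mathcomp Require Import all_classical all_reals all_analysis.
Set Implicit Arguments. Unset Strict Implicit. Unset Printing Implicit Defensive.
Import Order.TTheory GRing.Theory Num.Theory.
Import numFieldNormedType.Exports.
Local Open Scope ring_scope.

(* A weight family: W k : 'M_(d (k+1), d k); only the components k < L matter
   (W k is the paper's W_{k+1}). *)
Definition wfam (R : realType) (d : nat -> nat) := forall k : nat, 'M[R]_(d k.+1, d k).

Fixpoint prodW (R : realType) (d : nat -> nat) (W : wfam R d) (n : nat) : 'M[R]_(d n, d 0) :=
  match n with
  | 0 => 1%:M
  | n'.+1 => W n' *m prodW W n'
  end.

Definition frob2 (R : realType) m n (A : 'M[R]_(m, n)) : R :=
  \sum_(i < m) \sum_(j < n) A i j ^+ 2.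

Definition frobdot (R : realType) m n (A B : 'M[R]_(m, n)) : R :=
  \sum_(i < m) \sum_(j < n) A i j * B i j.

Definition Ymat (R : realType) (d : nat -> nat) (L : nat) (y : nat -> R) : 'M[R]_(d L, d 0) :=
  \matrix_(i < d L, j < d 0) (if (i : nat) == j then y i else 0).

Definition Gobj (R : realType) (d : nat -> nat) (L : nat) (lam : R) (y : nat -> R)
  (W : wfam R d) : R :=
  frob2 (prodW W L - Num.sqrt lam *: Ymat d L y) + lam * \sum_(l < L) frob2 (W l).

Definition wfam_add (R : realType) (d : nat -> nat) (W E : wfam R d) (t : R) : wfam R d :=
  fun k => W k + t *: E k.

Definition is_gradG (R : realType) (d : nat -> nat) (L : nat) (lam : R) (y : nat -> R)
  (W D : wfam R d) : Prop :=
  forall E : wfam R d,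
    is_derive (0 : R) (1 : R) (fun t : R => Gobj L lam y (wfam_add W E t))
              (\sum_(l < L) frobdot (D l) (E l)).

Definition famnorm (R : realType) (d : nat -> nat) (L : nat) (W : wfam R d) : R :=
  Num.sqrt (\sum_(l < L) frob2 (W l)).

Definition dmin (d : nat -> nat) (L : nat) : nat := minn (d 0) (d L).

Definition mu_const (R : realType) (d : nat -> nat) (L : nat) (lam : R) (y : nat -> R) : R :=
  \big[Num.min/lam]_(i < dmin d L | 0 < y i) `|lam - y i ^+ 2|.

Definition crit3 (R : realType) (L : nat) (yi : R) : R :=
  yi ^+ (2 * (L - 1)) *
  ((((L - 2)%:R / L%:R) `^ (L%:R / (2 * (L - 1))%:R)
    + ((L%:R / (L - 2)%:R) `^ ((L - 2)%:R / (2 * (L - 1))%:R))) ^- (2 * (L - 1))).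

Definition eps0 (R : realType) (d : nat -> nat) (L : nat) (lam : R) (y : nat -> R) : R :=
  if L == 2 then
    Num.sqrt (Num.sqrt lam * mu_const d L lam y / (2 * (Num.sqrt lam + y 0)))
  else if y 0 == 0 then (lam / 3) `^ (1 / (2 * L - 2)%:R)
  else Num.min ((lam / 3) `^ (1 / (2 * L - 2)%:R))
               ((Num.sqrt lam / (3 * y 0)) `^ (1 / (L - 2)%:R)).

Definition kappa0 (R : realType) (d : nat -> nat) (L : nat) (lam : R) (y : nat -> R) : R :=
  if L == 2 then 2 * (Num.sqrt lam + y 0) / (Num.sqrt lam * mu_const d L lam y)
  else 3 * Num.sqrt L%:R / (2 * lam).

From HB Require Import structures.
From mathcomp Require Import all_boot all_order all_algebra.
From mathcomp Require Import all_classical all_reals all_analysis.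
From mathcomp Require Import ring lra.
Set Implicit Arguments. Unset Strict Implicit. Unset Printing Implicit Defensive.
Import Order.TTheory GRing.Theory Num.Theory.
Local Open Scope ring_scope.

(* Write s = ||W||, c = sqrt lam and P = W_L ... W_1.  In both regimes the
   gradient is paired with a well-chosen direction E, and Cauchy-Schwarz gives
   <grad G(W), E> <= ||grad G(W)|| ||E||.
   For L >= 3 take E = W: rescaling all layers shows
   <grad G(W), W> = 2L (||P||^2 - c <P, Y>) + 2 lam s^2, and by submultiplicativity
   and AM-GM, L |<P, Y>| <= y_1 s^L <= (c / 3) s^2 on the ball of radius eps0, so
   <grad G(W), W> >= (4/3) lam s^2.
   For L = 2 take E = (lam W_1 - c W_2^T Y, lam W_2 - c Y W_1^T): every term of
   <grad G(W), E> involving Y cancels, leaving 2 ||E||^2 + 2 <W_2 W_1, E_2 W_1 + W_2 E_1>,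
   whose second term is O(s^3 ||E||).  Since Y is diagonal, ||E|| >= e s with
   e = c mu / (2 (c + y_1)) <= min (lam, |lam - c y_i|), and s^2 <= e then gives
   e s <= ||E|| <= ||grad G(W)||. *)

Section RealInequalities.
Variable R : realType.

Lemma sum_mul_sqr_le (I : finType) (f g : I -> R) :
  (\sum_i f i * g i) ^+ 2 <= (\sum_i f i ^+ 2) * (\sum_i g i ^+ 2).
Proof.
set A := \sum_i f i ^+ 2; set B := \sum_i g i ^+ 2; set C := \sum_i f i * g i.
have lagrange : \sum_i \sum_j (f i * g j - f j * g i) ^+ 2 = (A * B - C ^+ 2) *+ 2.
  transitivity (\sum_i (f i ^+ 2 * B + g i ^+ 2 * A - (f i * g i * C) *+ 2)).
    apply: eq_bigr => i _; rewrite !mulr_sumr -sumrMnl -big_split -sumrB /=.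
    by apply: eq_bigr => j _; ring.
  by rewrite sumrB big_split /= sumrMnl -!mulr_suml -/A -/B -/C; ring.
have : 0 <= \sum_i \sum_j (f i * g j - f j * g i) ^+ 2 :> R.
  by apply: sumr_ge0 => i _; apply: sumr_ge0 => j _; apply: sqr_ge0.
by rewrite lagrange pmulrn_lge0 // subr_ge0.
Qed.

Lemma norm_sum_mul_le (I : finType) (f g : I -> R) :
  `|\sum_i f i * g i| <= Num.sqrt (\sum_i f i ^+ 2) * Num.sqrt (\sum_i g i ^+ 2).
Proof.
have sq0 (h : I -> R) : 0 <= \sum_i h i ^+ 2 by apply: sumr_ge0 => i _; apply: sqr_ge0.
by rewrite -sqrtrM // -sqrtr_sqr ler_sqrt ?mulr_ge0 //; apply: sum_mul_sqr_le.
Qed.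

Lemma sqr_sum_sparse (I : finType) (u : I -> R) :
  (forall i k, i != k -> u i * u k = 0) -> (\sum_i u i) ^+ 2 = \sum_i u i ^+ 2.
Proof.
move=> sparse; rewrite expr2 mulr_suml; apply: eq_bigr => i _.
by rewrite mulr_sumr (bigD1 i) //= big1 ?addr0 ?expr2 // => k ki; rewrite mulrC sparse.
Qed.

Lemma sum_sqr_gap_le (I : finType) (r w : I -> R) (lam c e : R) :
  (forall i, 0 <= w i) -> (forall i, e ^+ 2 <= (lam - c * r i) ^+ 2) ->
  e ^+ 2 * \sum_i w i <=
  lam ^+ 2 * \sum_i w i - 2 * lam * c * \sum_i r i * w i + c ^+ 2 * \sum_i r i ^+ 2 * w i.
Proof.
move=> w0 gap; rewrite -subr_ge0 !mulr_sumr -sumrB -big_split -sumrB /=.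
apply: sumr_ge0 => i _.
rewrite (_ : _ - _ = ((lam - c * r i) ^+ 2 - e ^+ 2) * w i); last by ring.
by rewrite mulr_ge0 ?subr_ge0.
Qed.

Lemma prod_le_sqrt_sum_pow L (a : 'I_L -> R) :
  (2 <= L)%N -> (forall l, 0 <= a l) ->
  L%:R * \prod_l a l <= Num.sqrt (\sum_l a l ^+ 2) ^+ L.
Proof.
move=> L2 a0; set N := \sum_l a l ^+ 2.
have N0 : 0 <= N by apply: sumr_ge0 => l _; apply: sqr_ge0.
have agm : \prod_l a l ^+ 2 *+ L ^ L <= N ^+ L.
  have := leif_AGM_scaled (A := 'I_L) (E := fun l => a l ^+ 2)
    (fun l _ => mulrn_wge0 _ (sqr_ge0 (a l))).
  by rewrite prodrMn_const card_ord => -[].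
rewrite -ler_sqr ?nnegrE ?mulr_ge0 ?prodr_ge0 ?exprn_ge0 ?sqrtr_ge0 //.
rewrite exprMn -prodrXl -exprAC sqr_sqrtr // mulrC -natrX; apply: le_trans agm.
rewrite -[_ *+ L ^ L]mulr_natr; apply: ler_wpM2l.
  by apply: prodr_ge0 => l _; apply: sqr_ge0.
by rewrite ler_nat leq_pexp2l //; apply: leq_trans L2.
Qed.

Lemma mul_le_of_mul_sqr_le (a b s : R) :
  0 <= s -> 0 <= b -> a * s ^+ 2 <= b * s -> a * s <= b.
Proof.
move=> s0 b0; have [->|s_neq0] := eqVneq s 0; first by move=> _; rewrite mulr0.
by rewrite expr2 mulrA ler_pM2r // lt_neqAle eq_sym s_neq0.
Qed.

Lemma exprn_le_of_le_powR (s x : R) k :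
  (0 < k)%N -> 0 <= s -> 0 <= x -> s <= x `^ (1 / k%:R) -> s ^+ k <= x.
Proof.
move=> k0 s0 x0 s_le; rewrite -powR_mulrn //.
have := ge0_ler_powR (r := k%:R) (ler0n _ _) s0 (powR_ge0 _ _) s_le.
by rewrite -powRrM mul1r mulVf ?powRr1 // pnatr_eq0 -lt0n.
Qed.

End RealInequalities.

Local Notation fnorm A := (Num.sqrt (frob2 A)).

Section Frobenius.
Variable R : realType.

Lemma frobdot_trace m n (A B : 'M[R]_(m, n)) : frobdot A B = \tr (A *m B^T).
Proof. by apply: eq_bigr => i _; rewrite !mxE; apply: eq_bigr => j _; rewrite mxE. Qed.

Lemma frob2_frobdot m n (A : 'M[R]_(m, n)) : frob2 A = frobdot A A.
Proof. by apply: eq_bigr => i _; apply: eq_bigr => j _; rewrite expr2. Qed.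

Lemma frobdotC m n (A B : 'M[R]_(m, n)) : frobdot A B = frobdot B A.
Proof. by rewrite !frobdot_trace -mxtrace_tr trmx_mul trmxK. Qed.

Lemma frobdotDl m n (A B C : 'M[R]_(m, n)) :
  frobdot (A + B) C = frobdot A C + frobdot B C.
Proof. by rewrite !frobdot_trace mulmxDl mxtraceD. Qed.

Lemma frobdotZl m n a (A B : 'M[R]_(m, n)) : frobdot (a *: A) B = a * frobdot A B.
Proof. by rewrite !frobdot_trace -scalemxAl mxtraceZ. Qed.

Lemma frobdotBl m n (A B C : 'M[R]_(m, n)) :
  frobdot (A - B) C = frobdot A C - frobdot B C.
Proof. by rewrite -scaleN1r frobdotDl frobdotZl mulN1r. Qed.

Lemma frobdotDr m n (A B C : 'M[R]_(m, n)) :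
  frobdot A (B + C) = frobdot A B + frobdot A C.
Proof. by rewrite frobdotC frobdotDl !(frobdotC A). Qed.

Lemma frobdotZr m n a (A B : 'M[R]_(m, n)) : frobdot A (a *: B) = a * frobdot A B.
Proof. by rewrite frobdotC frobdotZl frobdotC. Qed.

Lemma frobdot_trmx m n (A B : 'M[R]_(m, n)) : frobdot A^T B^T = frobdot A B.
Proof. by rewrite !frobdot_trace trmxK -mxtrace_tr trmx_mul trmxK mxtrace_mulC. Qed.

Lemma frobdot_mulmxl m n p (Y : 'M[R]_(m, p)) (A : 'M[R]_(m, n)) (B : 'M[R]_(n, p)) :
  frobdot Y (A *m B) = frobdot (A^T *m Y) B.
Proof. by rewrite !frobdot_trace trmx_mul mulmxA mxtrace_mulC mulmxA. Qed.

Lemma frobdot_mulmxr m n p (Y : 'M[R]_(m, p)) (A : 'M[R]_(m, n)) (B : 'M[R]_(n, p)) :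
  frobdot Y (A *m B) = frobdot (Y *m B^T) A.
Proof. by rewrite !frobdot_trace trmx_mul mulmxA. Qed.

Lemma frob2_ge0 m n (A : 'M[R]_(m, n)) : 0 <= frob2 A.
Proof. by apply: sumr_ge0 => i _; apply: sumr_ge0 => j _; apply: sqr_ge0. Qed.

Lemma frob2_trmx m n (A : 'M[R]_(m, n)) : frob2 A^T = frob2 A.
Proof. by rewrite !frob2_frobdot frobdot_trmx. Qed.

Lemma frob2D m n (A B : 'M[R]_(m, n)) :
  frob2 (A + B) = frob2 A + 2 * frobdot A B + frob2 B.
Proof. by rewrite !frob2_frobdot frobdotDl !frobdotDr (frobdotC B A); ring. Qed.

Lemma frob2Z m n a (A : 'M[R]_(m, n)) : frob2 (a *: A) = a ^+ 2 * frob2 A.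
Proof. by rewrite !frob2_frobdot frobdotZl frobdotZr mulrA -expr2. Qed.

Lemma frob2B m n (A B : 'M[R]_(m, n)) :
  frob2 (A - B) = frob2 A - 2 * frobdot A B + frob2 B.
Proof. by rewrite -scaleN1r frob2D frob2Z frobdotZr sqrrN expr1n; ring. Qed.

Lemma norm_frobdot_le m n (A B : 'M[R]_(m, n)) : `|frobdot A B| <= fnorm A * fnorm B.
Proof.
rewrite /frobdot /frob2 !pair_bigA /=.
exact: (norm_sum_mul_le (fun p : 'I_m * 'I_n => A p.1 p.2) (fun p => B p.1 p.2)).
Qed.

Lemma frob2_mulmx_le m n p (A : 'M[R]_(m, n)) (B : 'M[R]_(n, p)) :
  frob2 (A *m B) <= frob2 A * frob2 B.
Proof.
rewrite /frob2 mulr_suml; apply: ler_sum => i _.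
rewrite [X in _ <= _ * X]exchange_big mulr_sumr; apply: ler_sum => j _; rewrite mxE.
exact: (sum_mul_sqr_le (fun k => A i k) (fun k => B k j)).
Qed.

Lemma fnorm_mulmx_le m n p (A : 'M[R]_(m, n)) (B : 'M[R]_(n, p)) :
  fnorm (A *m B) <= fnorm A * fnorm B.
Proof. by rewrite -sqrtrM ?frob2_ge0 // ler_sqrt ?mulr_ge0 ?frob2_ge0 // frob2_mulmx_le. Qed.

Lemma fnormD_le m n (A B : 'M[R]_(m, n)) : fnorm (A + B) <= fnorm A + fnorm B.
Proof.
rewrite -[fnorm A + _]ger0_norm ?addr_ge0 ?sqrtr_ge0 // -sqrtr_sqr ler_sqrt ?sqr_ge0 //.
rewrite frob2D sqrrD !sqr_sqrtr ?frob2_ge0 //.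
have := le_trans (ler_norm _) (norm_frobdot_le A B); lra.
Qed.

Lemma frob2_trmx_mulmx_sparse m n p (Z : 'M[R]_(m, p)) (Y : 'M[R]_(m, n)) :
  (forall i k j, i != k -> Y i j * Y k j = 0) ->
  frob2 (Z^T *m Y) = \sum_i (\sum_j Y i j ^+ 2) * \sum_a Z i a ^+ 2.
Proof.
move=> sparse.
have entry a j : (Z^T *m Y) a j ^+ 2 = \sum_i Z i a ^+ 2 * Y i j ^+ 2.
  rewrite mxE (eq_bigr (fun i => Z i a * Y i j)) => [|i _]; last by rewrite mxE.
  rewrite sqr_sum_sparse => [|i k ik]; last by rewrite mulrACA sparse ?mulr0.
  by apply: eq_bigr => i _; rewrite exprMn.
rewrite /frob2; under eq_bigr do under eq_bigr do rewrite entry.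
under eq_bigr do rewrite exchange_big /=.
rewrite exchange_big /=; apply: eq_bigr => i _.
by rewrite mulrC mulr_suml; apply: eq_bigr => a _; rewrite mulr_sumr.
Qed.

Lemma frobdot_mulmx_le m n p (Z : 'M[R]_(m, p)) (X : 'M[R]_(p, n)) (Y : 'M[R]_(m, n)) :
  (forall i j, 0 <= Y i j) ->
  2 * frobdot (Z *m X) Y <=
  \sum_i (\sum_j Y i j) * \sum_a Z i a ^+ 2 + \sum_j (\sum_i Y i j) * \sum_a X a j ^+ 2.
Proof.
move=> Y0; set rhs := (X in _ <= X).
have -> : rhs = \sum_i \sum_j \sum_a (Z i a ^+ 2 + X a j ^+ 2) * Y i j.
  rewrite /rhs; under eq_bigr do rewrite mulr_suml.
  under [X in _ + X]eq_bigr do rewrite mulr_suml.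
  rewrite [X in _ + X]exchange_big -big_split /=; apply: eq_bigr => i _.
  rewrite -big_split /=; apply: eq_bigr => j _.
  by rewrite !mulr_sumr -big_split /=; apply: eq_bigr => a _; ring.
rewrite /frobdot mulr_sumr; apply: ler_sum => i _; rewrite mulr_sumr; apply: ler_sum => j _.
rewrite mxE mulr_suml mulr_sumr; apply: ler_sum => a _.
by rewrite mulrA ler_wpM2r //; have := sqr_ge0 (Z i a - X a j); nra.
Qed.

Lemma sum_frobdot_le (d : nat -> nat) L (D E : wfam R d) :
  \sum_(l < L) frobdot (D l) (E l) <= famnorm L D * famnorm L E.
Proof.
have sqrK (l : 'I_L) (A : wfam R d) : frob2 (A l) = fnorm (A l) ^+ 2.
  by rewrite sqr_sqrtr ?frob2_ge0.
rewrite /famnorm (eq_bigr _ (fun l _ => sqrK l D)) (eq_bigr _ (fun l _ => sqrK l E)).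
apply: le_trans (norm_sum_mul_le _ _); apply: le_trans (ler_norm _).
by apply: ler_sum => l _; apply: le_trans (ler_norm _) (norm_frobdot_le _ _).
Qed.

Lemma famnorm_sqr (d : nat -> nat) L (W : wfam R d) :
  famnorm L W ^+ 2 = \sum_(l < L) frob2 (W l).
Proof. by rewrite sqr_sqrtr // sumr_ge0 // => l _; apply: frob2_ge0. Qed.

End Frobenius.

Section RectangularDiagonal.
Variable R : realType.

(* [Ymat d L y] is convertible to [rdiag_mx (d L) (d 0) y]. *)
Definition rdiag_mx m n (y : nat -> R) : 'M[R]_(m, n) :=
  \matrix_(i < m, j < n) (if (i : nat) == j then y i else 0).

Definition ytrunc n (y : nat -> R) k : R := if (k < n)%N then y k else 0.

Lemma trmx_rdiag m n y : (rdiag_mx m n y)^T = rdiag_mx n m y.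
Proof. by apply/matrixP => i j; rewrite !mxE eq_sym; case: eqP => // ->. Qed.

Lemma rdiag_sum_row m n y (f : R -> R) (i : 'I_m) :
  f 0 = 0 -> \sum_(j < n) f (rdiag_mx m n y i j) = f (ytrunc n y i).
Proof.
move=> f0; rewrite /ytrunc; case: ltnP => [ilt|ige].
  rewrite (bigD1 (Ordinal ilt)) //= mxE eqxx big1 ?addr0 // => j ji; rewrite mxE.
  by case: eqP => // ij; case/eqP: ji; apply: val_inj.
rewrite big1 // => j _; rewrite mxE; case: eqP => // ij.
by have := ltn_ord j; rewrite -ij ltnNge ige.
Qed.

Lemma rdiag_sum_col m n y (j : 'I_n) : \sum_(i < m) rdiag_mx m n y i j = ytrunc m y j.
Proof.
rewrite -(@rdiag_sum_row _ _ y id) //; apply: eq_bigr => i _.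
by rewrite -trmx_rdiag mxE.
Qed.

Lemma rdiag_ge0 m n y :
  (forall k, (k < minn m n)%N -> 0 <= y k) -> forall i j, 0 <= rdiag_mx m n y i j.
Proof.
by move=> y0 i j; rewrite mxE; case: eqP => // ij; rewrite y0 // leq_min ltn_ord ij ltn_ord.
Qed.

Lemma frob2_trmx_mul_rdiag m n p (Z : 'M[R]_(m, p)) y :
  frob2 (Z^T *m rdiag_mx m n y) = \sum_(i < m) ytrunc n y i ^+ 2 * \sum_a Z i a ^+ 2.
Proof.
rewrite frob2_trmx_mulmx_sparse => [|i k j ik]; last first.
  rewrite !mxE; case: eqP => [ij|_]; case: eqP => [kj|_]; rewrite ?mulr0 ?mul0r //.
  by case/eqP: ik; apply: val_inj; rewrite /= ij kj.
by apply: eq_bigr => i _; rewrite (@rdiag_sum_row _ _ y (fun x => x ^+ 2)) ?expr0n.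
Qed.

Lemma norm_frobdot_mulmx_rdiag_le m n p (A : 'M[R]_(m, p)) (Q : 'M[R]_(p, n)) y yb :
  0 <= yb -> (forall k, (k < minn m n)%N -> `|y k| <= yb) ->
  `|frobdot (A *m Q) (rdiag_mx m n y)| <= yb * (fnorm A * fnorm Q).
Proof.
move=> yb0 yb_ge; rewrite frobdotC frobdot_mulmxl.
apply: le_trans (norm_frobdot_le _ _) _; rewrite mulrA ler_wpM2r ?sqrtr_ge0 //.
rewrite -(ger0_norm yb0) -sqrtr_sqr -sqrtrM ?sqr_ge0 //.
rewrite ler_sqrt ?mulr_ge0 ?sqr_ge0 ?frob2_ge0 //.
rewrite frob2_trmx_mul_rdiag /frob2 mulr_sumr; apply: ler_sum => i _.
apply: ler_wpM2r; first by apply: sumr_ge0 => a _; apply: sqr_ge0.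
rewrite /ytrunc; case: ltnP => [ilt|_]; last by rewrite expr0n sqr_ge0.
rewrite -(real_normK (num_real (y i))) ler_sqr ?nnegrE ?normr_ge0 //.
by rewrite yb_ge // leq_min ltn_ord ilt.
Qed.

Lemma sqr_gap_ytrunc m n y (lam c e : R) (i : 'I_m) :
  e ^+ 2 <= lam ^+ 2 -> (forall k, (k < minn m n)%N -> e ^+ 2 <= (lam - c * y k) ^+ 2) ->
  e ^+ 2 <= (lam - c * ytrunc n y i) ^+ 2.
Proof.
move=> e_lam e_gap; rewrite /ytrunc; case: ltnP => [ilt|_]; last by rewrite mulr0 subr0.
by rewrite e_gap // leq_min ltn_ord ilt.
Qed.

Lemma frob2_descent_ge m n p (X : 'M[R]_(p, n)) (Z : 'M[R]_(m, p)) y (lam c e : R) :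
  0 <= lam * c -> (forall k, (k < minn m n)%N -> 0 <= y k) ->
  e ^+ 2 <= lam ^+ 2 -> (forall k, (k < minn m n)%N -> e ^+ 2 <= (lam - c * y k) ^+ 2) ->
  e ^+ 2 * (frob2 X + frob2 Z) <=
  frob2 (lam *: X - c *: (Z^T *m rdiag_mx m n y)) +
  frob2 (lam *: Z - c *: (rdiag_mx m n y *m X^T)).
Proof.
move=> lc0 y0 e_lam e_gap; set Y := rdiag_mx m n y; set C := frobdot (Z *m X) Y.
have eX : frob2 (lam *: X - c *: (Z^T *m Y)) = lam ^+ 2 * frob2 X - 2 * lam * c * C
    + c ^+ 2 * \sum_(i < m) ytrunc n y i ^+ 2 * \sum_a Z i a ^+ 2.
  rewrite frob2B !frob2Z frobdotZl frobdotZr frob2_trmx_mul_rdiag.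
  by rewrite frobdotC -frobdot_mulmxl /C frobdotC; ring.
have eZ : frob2 (lam *: Z - c *: (Y *m X^T)) = lam ^+ 2 * frob2 Z - 2 * lam * c * C
    + c ^+ 2 * \sum_(j < n) ytrunc m y j ^+ 2 * \sum_a X^T j a ^+ 2.
  rewrite frob2B !frob2Z frobdotZl frobdotZr -[frob2 (Y *m _)]frob2_trmx trmx_mul.
  rewrite trmx_rdiag frob2_trmx_mul_rdiag.
  by rewrite frobdotC -frobdot_mulmxr [frobdot Y _]frobdotC -/C; ring.
have cross : 2 * C <= \sum_(i < m) ytrunc n y i * \sum_a Z i a ^+ 2
                    + \sum_(j < n) ytrunc m y j * \sum_a X^T j a ^+ 2.
  apply: le_trans (frobdot_mulmx_le _ _ (rdiag_ge0 y0)) _.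
  rewrite lerD //; apply: ler_sum => i _.
    by rewrite (@rdiag_sum_row _ _ y id).
  rewrite rdiag_sum_col [Q in _ <= _ * Q](eq_bigr (fun a => X a i ^+ 2)) // => a _.
  by rewrite mxE.
have ge0_rows q r (M : 'M[R]_(q, r)) i : 0 <= \sum_a M i a ^+ 2.
  by apply: sumr_ge0 => a _; apply: sqr_ge0.
have gapZ := sum_sqr_gap_le (ge0_rows _ _ Z)
  (fun i => sqr_gap_ytrunc (n := n) i e_lam e_gap).
have e_gap' k : (k < minn n m)%N -> e ^+ 2 <= (lam - c * y k) ^+ 2.
  by rewrite minnC; apply: e_gap.
have gapX := sum_sqr_gap_le (ge0_rows _ _ X^T)
  (fun j => sqr_gap_ytrunc (n := m) j e_lam e_gap').
rewrite eX eZ -[frob2 X]frob2_trmx /frob2.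
have := ler_wpM2l lc0 cross.
lra.
Qed.

End RectangularDiagonal.

Section DirectionalDerivative.
Variables (R : realType) (x v : R).

Lemma is_derive_ext (f g : R -> R) (df : R) :
  f =1 g -> is_derive x v g df -> is_derive x v f df.
Proof. by move=> /funext ->. Qed.

Lemma is_derive_unique (f : R -> R) (df dg : R) :
  is_derive x v f df -> is_derive x v f dg -> df = dg.
Proof. by move=> hf hg; rewrite -(@derive_val _ _ _ _ _ _ _ hf) derive_val. Qed.

Lemma is_derive_sumr n (h : 'I_n -> R -> R) (dh : 'I_n -> R) :
  (forall i, is_derive x v (h i) (dh i)) ->
  is_derive x v (fun t => \sum_(i < n) h i t) (\sum_(i < n) dh i).
Proof. by move=> hd; rewrite -fct_sumE; apply: is_derive_sum. Qed.

Lemma is_derive_mulr (f g : R -> R) (df dg : R) :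
  is_derive x v f df -> is_derive x v g dg ->
  is_derive x v (fun t => f t * g t) (f x * dg + g x * df).
Proof. exact: is_deriveM. Qed.

Lemma is_derive_affine (a b : R) : is_derive x v (fun t => a + t * b) (v * b).
Proof.
apply: is_derive_eq (is_deriveD (is_derive_cst a x v)
  (is_derive_mulr (is_derive_id x v) (is_derive_cst b x v))) _.
by rewrite mulr0 !add0r mulrC.
Qed.

Lemma is_derive_frob2 m n (M : R -> 'M[R]_(m, n)) (M' : 'M[R]_(m, n)) :
  (forall i j, is_derive x v (fun t => M t i j) (M' i j)) ->
  is_derive x v (fun t => frob2 (M t)) (2 * frobdot (M x) M').
Proof.
move=> dM; rewrite /frobdot mulr_sumr.
apply: is_derive_sumr => i; rewrite mulr_sumr; apply: is_derive_sumr => j.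
apply: is_derive_eq (is_derive_mulr (dM i j) (dM i j)) _; ring.
Qed.

End DirectionalDerivative.

Section Gradient.
Variables (R : realType) (d : nat -> nat).
Implicit Types W E D : wfam R d.

Fixpoint dprodW W E n : 'M[R]_(d n, d 0) :=
  if n is n'.+1 then E n' *m prodW W n' + W n' *m dprodW W E n' else 0.

Lemma wfam_add0 W E : wfam_add W E 0 = W.
Proof. by apply: functional_extensionality_dep => k; rewrite /wfam_add scale0r addr0. Qed.

Lemma is_derive_prodW W E n i j :
  is_derive (0 : R) 1 (fun t => prodW (wfam_add W E t) n i j) (dprodW W E n i j).
Proof.
elim: n i j => [|n IH] i j /=.
  by rewrite [X in is_derive _ _ _ X]mxE -cstE; apply: is_derive_cst.
have dk k : is_derive (0 : R) 1
    (fun t => (W n i k + t * E n i k) * prodW (wfam_add W E t) n k j)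
    ((W n i k + 0 * E n i k) * dprodW W E n k j +
     prodW (wfam_add W E 0) n k j * (1 * E n i k)).
  exact: is_derive_mulr (is_derive_affine _ _ _ _) (IH k j).
have -> : (fun t => (wfam_add W E t n *m prodW (wfam_add W E t) n) i j) =
          (fun t => \sum_k (W n i k + t * E n i k) * prodW (wfam_add W E t) n k j).
  by apply/funext => t; rewrite mxE; apply: eq_bigr => k _; rewrite !mxE.
apply: is_derive_eq (is_derive_sumr dk) _.
by rewrite wfam_add0 !mxE -big_split; apply: eq_bigr => k _ /=; ring.
Qed.

Lemma is_derive_Gobj L lam y W E :
  is_derive (0 : R) 1 (fun t => Gobj L lam y (wfam_add W E t))
    (2 * frobdot (prodW W L - Num.sqrt lam *: Ymat d L y) (dprodW W E L)
     + lam * \sum_(l < L) 2 * frobdot (W l) (E l)).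
Proof.
set c := Num.sqrt lam; set Y := Ymat d L y.
have dP i j : is_derive (0 : R) 1
    (fun t => (prodW (wfam_add W E t) L - c *: Y) i j) (dprodW W E L i j).
  apply: (@is_derive_ext _ _ _ _ (fun t => prodW (wfam_add W E t) L i j + - (c * Y i j))).
    by move=> t; rewrite !mxE.
  apply: is_derive_eq (is_deriveD (is_derive_prodW W E i j)
                                  (is_derive_cst (- (c * Y i j)) _ _)) _.
  by rewrite addr0.
have dW l i j : is_derive (0 : R) 1 (fun t => wfam_add W E t l i j) (E l i j).
  apply: (@is_derive_ext _ _ _ _ (fun t => W l i j + t * E l i j)).
    by move=> t; rewrite !mxE.
  by apply: is_derive_eq (is_derive_affine _ _ _ _) _; rewrite mul1r.
have dWs := is_derive_sumr (fun l : 'I_L => is_derive_frob2 (dW l)).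
apply: is_derive_eq (is_deriveD (is_derive_frob2 dP)
                                (is_derive_mulr (is_derive_cst lam _ _) dWs)) _.
by rewrite !wfam_add0 mulr0 addr0.
Qed.

Lemma gradG_frobdot L lam y W D E : is_gradG L lam y W D ->
  \sum_(l < L) frobdot (D l) (E l) =
  2 * frobdot (prodW W L - Num.sqrt lam *: Ymat d L y) (dprodW W E L)
  + lam * \sum_(l < L) 2 * frobdot (W l) (E l).
Proof. by move=> gradD; apply: is_derive_unique (gradD E) (is_derive_Gobj _ _ _ _ _). Qed.

End Gradient.

Section DeepCase.
Variables (R : realType) (d : nat -> nat).
Implicit Types W D : wfam R d.

Lemma dprodW_dilation W n : dprodW W W n = n%:R *: prodW W n.
Proof.
elim: n => [|n IH] /=; first by rewrite scale0r.
by rewrite IH -scalemxAr -[X in X + _]scale1r -scalerDl addrC natr1.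
Qed.

Lemma gradG_dilation L lam y W D : is_gradG L lam y W D ->
  \sum_(l < L) frobdot (D l) (W l) =
  2 * L%:R * (frob2 (prodW W L) - Num.sqrt lam * frobdot (prodW W L) (Ymat d L y))
  + 2 * lam * \sum_(l < L) frob2 (W l).
Proof.
move=> gradD; rewrite (gradG_frobdot W gradD) dprodW_dilation frobdotZr frobdotBl frobdotZl.
rewrite -frob2_frobdot [frobdot (Ymat _ _ _) _]frobdotC -mulr_sumr.
under eq_bigr do rewrite -frob2_frobdot.
ring.
Qed.

Lemma fnorm_prodW_le W n : fnorm (prodW W n.+1) <= \prod_(l < n.+1) fnorm (W l).
Proof.
elim: n => [|n IH]; first by rewrite big_ord1 /= mulmx1.
rewrite big_ord_recr /= mulrC; apply: le_trans (fnorm_mulmx_le _ _) _.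
by apply: ler_wpM2l; first exact: sqrtr_ge0.
Qed.

Lemma norm_frobdot_prodW_le W n y yb :
  0 <= yb -> (forall k, (k < minn (d n.+2) (d 0))%N -> `|y k| <= yb) ->
  `|frobdot (prodW W n.+2) (Ymat d n.+2 y)| <= yb * \prod_(l < n.+2) fnorm (W l).
Proof.
move=> yb0 hy.
apply: le_trans (norm_frobdot_mulmx_rdiag_le (W n.+1) (prodW W n.+1) yb0 hy) _.
apply: ler_wpM2l => //; rewrite [X in _ <= X]big_ord_recr mulrC.
by apply: ler_pM; rewrite ?sqrtr_ge0 //; apply: fnorm_prodW_le.
Qed.

Lemma mul_norm_frobdot_prodW_le W n y yb :
  0 <= yb -> (forall k, (k < minn (d n.+2) (d 0))%N -> `|y k| <= yb) ->
  n.+2%:R * `|frobdot (prodW W n.+2) (Ymat d n.+2 y)| <= yb * famnorm n.+2 W ^+ n.+2.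
Proof.
move=> yb0 hy; apply: le_trans (ler_wpM2l (ler0n _ _) (norm_frobdot_prodW_le W yb0 hy)) _.
rewrite mulrCA; apply: ler_wpM2l => //; rewrite /famnorm.
have -> : \sum_(l < n.+2) frob2 (W l) = \sum_(l < n.+2) fnorm (W l) ^+ 2.
  by apply: eq_bigr => l _; rewrite sqr_sqrtr ?frob2_ge0.
by apply: prod_le_sqrt_sum_pow => // l; apply: sqrtr_ge0.
Qed.

Lemma gradG_lbound_deep L lam y W D : (3 <= L)%N -> 0 < lam -> 0 <= y 0%N ->
  (forall k, (k < dmin d L)%N -> `|y k| <= y 0%N) -> is_gradG L lam y W D ->
  y 0%N * famnorm L W ^+ (L - 2) <= Num.sqrt lam / 3 ->
  4 / 3 * lam * famnorm L W <= famnorm L D.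
Proof.
case: L => [|[|L]] // _ lam0 y00 hy gradD small.
set s := famnorm L.+2 W; set c := Num.sqrt lam.
set P := prodW W L.+2; set Y := Ymat d L.+2 y.
have s0 : 0 <= s by apply: sqrtr_ge0.
have PY : L.+2%:R * `|frobdot P Y| <= y 0%N * s ^+ L.+2.
  by apply: mul_norm_frobdot_prodW_le y00 _ => k; rewrite minnC; apply: hy.
have cPY : c * (L.+2%:R * frobdot P Y) <= lam / 3 * s ^+ 2.
  have -> : lam / 3 * s ^+ 2 = c * (c / 3 * s ^+ 2).
    by rewrite -[in LHS](sqr_sqrtr (ltW lam0)) -/c; ring.
  apply: ler_wpM2l; first exact: sqrtr_ge0.
  apply: le_trans (ler_wpM2l (ler0n _ _) (ler_norm _)) _; apply: le_trans PY _.
  rewrite !subSS subn0 in small.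
  by rewrite -addn2 exprD mulrA ler_wpM2r ?sqr_ge0.
have := gradG_dilation gradD; rewrite -famnorm_sqr -/s -/c -/P -/Y => grad_eq.
have := sum_frobdot_le L.+2 D W; rewrite -/s grad_eq => cs.
apply: mul_le_of_mul_sqr_le s0 (sqrtr_ge0 _) _; rewrite -/(famnorm _ D).
have := mulr_ge0 (ler0n R L.+2) (frob2_ge0 P).
lra.
Qed.

Lemma kappa0_bound_deep L lam y W D :
  (3 <= L)%N -> 0 < lam -> 0 <= y 0%N -> (forall k, (k < dmin d L)%N -> `|y k| <= y 0%N) ->
  is_gradG L lam y W D -> famnorm L W <= eps0 d L lam y ->
  famnorm L W <= kappa0 d L lam y * famnorm L D.
Proof.
move=> L3 lam0 y00 hy gradD; have L_neq2 : L != 2%N by apply: contraTneq L3 => ->.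
rewrite /eps0 /kappa0 (negbTE L_neq2); set s := famnorm L W => s_le.
have s0 : 0 <= s by apply: sqrtr_ge0.
have small : y 0%N * s ^+ (L - 2) <= Num.sqrt lam / 3.
  move: s_le; have [-> _|y0_neq0] := eqVneq (y 0%N) 0.
    by rewrite mul0r divr_ge0 ?sqrtr_ge0.
  have y0_gt0 : 0 < y 0%N by rewrite lt_neqAle eq_sym y0_neq0.
  (* Only the second term of the minimum defining eps0 is needed. *)
  rewrite le_min => /andP[_ s_root].
  have x0 : 0 <= Num.sqrt lam / (3 * y 0%N) by rewrite divr_ge0 ?mulr_ge0 ?sqrtr_ge0 // ltW.
  have L2 : (0 < L - 2)%N by rewrite subn_gt0.
  apply: le_trans (ler_wpM2l (ltW y0_gt0) (exprn_le_of_le_powR L2 s0 x0 s_root)) _.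
  by rewrite invfM mulrCA [y 0%N * _]mulrCA mulfV // mulr1.
have deep_bound := gradG_lbound_deep L3 lam0 y00 hy gradD small; rewrite -/s in deep_bound.
have sqrtL : 1 <= Num.sqrt L%:R :> R.
  by rewrite -[X in X <= _]sqrtr1 ler_sqrt // ler1n; apply: leq_trans L3.
have nD0 : 0 <= famnorm L D by apply: sqrtr_ge0.
have := ler_wpM2r nD0 sqrtL; rewrite mul1r.
rewrite mulrAC ler_pdivlMr ?mulr_gt0 //; lra.
Qed.

End DeepCase.

Section ShallowCase.
Variables (R : realType) (d : nat -> nat).
Implicit Types W D : wfam R d.

Definition wfam2 (A : 'M[R]_(d 1, d 0)) (B : 'M[R]_(d 2, d 1)) : wfam R d :=
  fun k => match k as k0 return 'M[R]_(d k0.+1, d k0) with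
           | 0 => A | 1 => B | _ => 0 end.

(* Up to a factor 2, the gradient of G at W once the product W_2 W_1 is dropped
   from the residual W_2 W_1 - sqrt lam Y. *)
Definition descent2 (lam : R) y W : wfam R d :=
  wfam2 (lam *: W 0%N - Num.sqrt lam *: ((W 1%N)^T *m Ymat d 2 y))
        (lam *: W 1%N - Num.sqrt lam *: (Ymat d 2 y *m (W 0%N)^T)).

Lemma famnorm2_sqr W : famnorm 2 W ^+ 2 = fnorm (W 0%N) ^+ 2 + fnorm (W 1%N) ^+ 2.
Proof. by rewrite famnorm_sqr !big_ord_recr big_ord0 /= add0r !sqr_sqrtr ?frob2_ge0. Qed.

Lemma gradG_descent2 lam y W D : is_gradG 2 lam y W D ->
  let E := descent2 lam y W in
  \sum_(l < 2) frobdot (D l) (E l) =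
  2 * famnorm 2 E ^+ 2 + 2 * frobdot (W 1%N *m W 0%N) (E 1%N *m W 0%N + W 1%N *m E 0%N).
Proof.
move=> gradD E; rewrite (gradG_frobdot E gradD) famnorm2_sqr !sqr_sqrtr ?frob2_ge0 //.
set X := W 0%N; set Z := W 1%N; set E0 := E 0%N; set E1 := E 1%N.
set c := Num.sqrt lam; set Y := Ymat d 2 y.
rewrite !big_ord_recr !big_ord0 /= !add0r !mulmx1 mulmx0 addr0 -/E0 -/E1.
have f0 : frob2 E0 = lam * frobdot X E0 - c * frobdot (Z^T *m Y) E0.
  by rewrite frob2_frobdot {1}/E0 /E /= frobdotBl !frobdotZl.
have f1 : frob2 E1 = lam * frobdot Z E1 - c * frobdot (Y *m X^T) E1.
  by rewrite frob2_frobdot {1}/E1 /E /= frobdotBl !frobdotZl.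
rewrite f0 f1 frobdotBl frobdotZl [frobdot Y _]frobdotDr frobdot_mulmxr frobdot_mulmxl.
by rewrite -/c; ring.
Qed.

Lemma famnorm_descent2_ge lam y W e :
  0 < lam -> 0 <= e -> (forall k, (k < dmin d 2)%N -> 0 <= y k) ->
  e ^+ 2 <= lam ^+ 2 ->
  (forall k, (k < dmin d 2)%N -> e ^+ 2 <= (lam - Num.sqrt lam * y k) ^+ 2) ->
  e * famnorm 2 W <= famnorm 2 (descent2 lam y W).
Proof.
move=> lam0 e0 y0 e_lam e_gap.
rewrite -ler_sqr ?nnegrE ?mulr_ge0 ?sqrtr_ge0 // exprMn !famnorm2_sqr !sqr_sqrtr ?frob2_ge0 //.
apply: frob2_descent_ge => //; first by rewrite mulr_ge0 ?sqrtr_ge0 ?ltW.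
  by move=> k; rewrite minnC; apply: y0.
by move=> k; rewrite minnC; apply: e_gap.
Qed.

Lemma norm_frobdot_wfam2_le (W E : wfam R d) :
  2 * `|frobdot (W 1%N *m W 0%N) (E 1%N *m W 0%N + W 1%N *m E 0%N)|
  <= famnorm 2 W ^+ 3 * famnorm 2 E.
Proof.
set a0 := fnorm (W 0%N); set a1 := fnorm (W 1%N).
set b0 := fnorm (E 0%N); set b1 := fnorm (E 1%N).
have [a00 a10 b00 b10] : [/\ 0 <= a0, 0 <= a1, 0 <= b0 & 0 <= b1] by split; apply: sqrtr_ge0.
have [s0 eps0] : 0 <= famnorm 2 W /\ 0 <= famnorm 2 E by split; apply: sqrtr_ge0.
have cross : `|frobdot (W 1%N *m W 0%N) (E 1%N *m W 0%N + W 1%N *m E 0%N)| <=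
    a0 * a1 * (b1 * a0 + a1 * b0).
  apply: le_trans (norm_frobdot_le _ _) _.
  apply: ler_pM; rewrite ?sqrtr_ge0 //; first by rewrite mulrC fnorm_mulmx_le.
  by apply: le_trans (fnormD_le _ _) _; rewrite lerD ?fnorm_mulmx_le.
have cs : b1 * a0 + a1 * b0 <= famnorm 2 W * famnorm 2 E.
  rewrite -ler_sqr ?nnegrE ?mulr_ge0 ?addr_ge0 ?mulr_ge0 //.
  rewrite exprMn !famnorm2_sqr -/a0 -/a1 -/b0 -/b1.
  by have := sqr_ge0 (a0 * b0 - a1 * b1); nra.
have amgm : 2 * (a0 * a1) <= famnorm 2 W ^+ 2.
  by rewrite famnorm2_sqr -/a0 -/a1; have := sqr_ge0 (a0 - a1); nra.
apply: le_trans (ler_wpM2l (ler0n _ 2) cross) _.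
rewrite mulrA exprSr -[X in _ <= X]mulrA.
by apply: ler_pM; rewrite ?mulr_ge0 ?addr_ge0 ?mulr_ge0.
Qed.

Lemma gradG_lbound_shallow lam y W D (e : R) :
  0 < lam -> 0 <= e -> (forall k, (k < dmin d 2)%N -> 0 <= y k) ->
  e ^+ 2 <= lam ^+ 2 ->
  (forall k, (k < dmin d 2)%N -> e ^+ 2 <= (lam - Num.sqrt lam * y k) ^+ 2) ->
  is_gradG 2 lam y W D -> famnorm 2 W ^+ 2 <= e -> e * famnorm 2 W <= famnorm 2 D.
Proof.
move=> lam0 e0 y0 e_lam e_gap gradD small.
have es := famnorm_descent2_ge W lam0 e0 y0 e_lam e_gap.
have upper := sum_frobdot_le 2 D (descent2 lam y W).
rewrite (gradG_descent2 gradD) in upper.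
have cross := norm_frobdot_wfam2_le W (descent2 lam y W).
set F := frobdot _ _ in upper cross.
set s := famnorm 2 W in es small cross *.
set eps := famnorm 2 (descent2 lam y W) in es upper cross *.
set nD := famnorm 2 D in upper *.
have [s0 eps0 nD0] : [/\ 0 <= s, 0 <= eps & 0 <= nD] by split; apply: sqrtr_ge0.
have := ler_wpM2r (mulr_ge0 s0 eps0) small; have := ler_wpM2r eps0 es.
have := ler_norm (- F); rewrite normrN => ? ? ?.
apply: le_trans es _; rewrite -[eps]mul1r; apply: mul_le_of_mul_sqr_le => //; lra.
Qed.

Lemma mu_const_ge0 L (lam : R) y : 0 <= lam -> 0 <= mu_const d L lam y.
Proof.
by move=> lam0; apply: (big_ind (fun x => 0 <= x)) => // x z x0 z0; rewrite le_min x0 z0.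
Qed.

Lemma mu_const_le L (lam : R) y : mu_const d L lam y <= lam.
Proof.
by apply: (big_rec (fun x => x <= lam)) => // i x _ x_le; rewrite ge_min x_le orbT.
Qed.

Lemma mu_const_le_gap L (lam : R) y k : 0 < lam -> (k < dmin d L)%N -> 0 <= y k ->
  mu_const d L lam y <= `|Num.sqrt lam - y k| * (Num.sqrt lam + y k).
Proof.
move=> lam0 kL yk0.
have -> : `|Num.sqrt lam - y k| * (Num.sqrt lam + y k) = `|lam - y k ^+ 2|.
  by rewrite -[in RHS](sqr_sqrtr (ltW lam0)) subr_sqr normrM
    (ger0_norm (addr_ge0 (sqrtr_ge0 lam) yk0)).
have [yk_eq0|yk_gt0] := eqVneq (y k) 0; last first.
  rewrite /mu_const (bigD1 (Ordinal kL)) /= ?ge_min ?lexx //.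
  by rewrite lt_neqAle eq_sym yk_gt0.
by rewrite yk_eq0 expr0n subr0 (ger0_norm (ltW lam0)) mu_const_le.
Qed.

Definition gap2 (lam : R) y :=
  Num.sqrt lam * mu_const d 2 lam y / (2 * (Num.sqrt lam + y 0%N)).

Lemma gap2_ge0 lam y : 0 < lam -> 0 <= y 0%N -> 0 <= gap2 lam y.
Proof.
move=> lam0 y00; rewrite /gap2 divr_ge0 ?mulr_ge0 ?addr_ge0 ?sqrtr_ge0 //.
exact/mu_const_ge0/ltW.
Qed.

Lemma gap2_le lam y k : 0 < lam -> (k < dmin d 2)%N -> 0 <= y k <= y 0%N ->
  gap2 lam y <= `|lam - Num.sqrt lam * y k|.
Proof.
move=> lam0 kL /andP[yk0 yk_le]; set c := Num.sqrt lam.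
have c0 : 0 < c by rewrite sqrtr_gt0.
have -> : `|lam - c * y k| = c * `|c - y k|.
  by rewrite -[in LHS](sqr_sqrtr (ltW lam0)) -/c -mulrBr normrM gtr0_norm.
have y00 : 0 <= y 0%N := le_trans yk0 yk_le.
rewrite /gap2 -/c ler_pdivrMr ?mulr_gt0 ?ltr_wpDr // -mulrA ler_pM2l //.
apply: le_trans (mu_const_le_gap lam0 kL yk0) _; apply: ler_wpM2l; first exact: normr_ge0.
by rewrite -/c; lra.
Qed.

Lemma gap2_le_lam lam y : 0 < lam -> 0 <= y 0%N -> gap2 lam y <= lam.
Proof.
move=> lam0 y00; set c := Num.sqrt lam.
have c0 : 0 < c by rewrite sqrtr_gt0.
rewrite /gap2 -/c ler_pdivrMr ?mulr_gt0 ?ltr_wpDr //.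
have := ler_wpM2l (ltW c0) (mu_const_le 2 lam y); have := mulr_ge0 (ltW lam0) y00.
have := mulr_ge0 (ltW lam0) (ltW c0); lra.
Qed.

Lemma kappa0_bound_shallow lam y W D :
  0 < lam -> 0 <= y 0%N -> (forall k, (k < dmin d 2)%N -> 0 <= y k <= y 0%N) ->
  is_gradG 2 lam y W D -> famnorm 2 W <= eps0 d 2 lam y ->
  famnorm 2 W <= kappa0 d 2 lam y * famnorm 2 D.
Proof.
move=> lam0 y00 hy gradD; rewrite /eps0 /kappa0 /= -/(gap2 lam y).
rewrite (_ : _ / _ = (gap2 lam y)^-1); last by rewrite /gap2 invf_div.
set e := gap2 lam y; set s := famnorm 2 W => s_le.
have e0 : 0 <= e by apply: gap2_ge0.
have small : s ^+ 2 <= e.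
  by rewrite -(sqr_sqrtr e0) ler_sqr ?nnegrE ?sqrtr_ge0.
have e_lam : e ^+ 2 <= lam ^+ 2.
  by rewrite ler_sqr ?nnegrE ?(ltW lam0) // gap2_le_lam.
have e_gap k : (k < dmin d 2)%N -> e ^+ 2 <= (lam - Num.sqrt lam * y k) ^+ 2.
  move=> kL; rewrite -[(lam - _) ^+ 2]real_normK ?num_real // ler_sqr ?nnegrE ?normr_ge0 //.
  exact: gap2_le lam0 kL (hy k kL).
have y0 k (kL : (k < dmin d 2)%N) : 0 <= y k by case/andP: (hy k kL).
have := gradG_lbound_shallow lam0 e0 y0 e_lam e_gap gradD small.
(* If mu = 0 then eps0 = 0 forces W = 0, while kappa0 = 2 (c + y_1) / 0 is 0. *)
have [e_eq0 _|e_gt0 es] := eqVneq e 0.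
  have -> : s = 0 by apply/eqP; rewrite -sqrf_eq0 eq_le sqr_ge0 andbT -e_eq0.
  by rewrite e_eq0 invr0 mul0r.
by rewrite ler_pdivlMl // lt_neqAle eq_sym e_gt0.
Qed.

End ShallowCase.

Theorem proposition3p4 (R : realType) (L : nat) (d : nat -> nat) (lam : R) (y : nat -> R) :
  (2 <= L)%N ->
  (forall k, (k <= L)%N -> (0 < d k)%N) ->
  0 < lam ->
  (forall i j, (i <= j)%N -> (j < dmin d L)%N -> y j <= y i) ->
  (forall i, (i < dmin d L)%N -> 0 <= y i) ->
  (forall k, (0 < k)%N -> (k < L)%N -> (dmin d L <= d k)%N) ->
  (L = 2%N -> forall i, (i < dmin d L)%N -> 0 < y i -> lam != y i ^+ 2) ->
  ((3 <= L)%N -> forall i, (i < dmin d L)%N -> 0 < y i -> lam != crit3 L (y i)) ->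
  forall W D : wfam R d,
    is_gradG L lam y W D ->
    famnorm L W <= eps0 d L lam y ->
    famnorm L W <= kappa0 d L lam y * famnorm L D.
Proof.
move=> L2 d_gt0 lam0 y_mono y_ge0 _ _ _ W D gradD.
have y00 : 0 <= y 0%N by apply: y_ge0; rewrite leq_min !d_gt0.
have [L_eq2|L_neq2] := eqVneq L 2%N.
  subst L; apply: kappa0_bound_shallow => // k kL.
  by rewrite y_ge0 // y_mono.
apply: kappa0_bound_deep => //; first by rewrite ltn_neqAle eq_sym L_neq2.
by move=> k kL; rewrite ger0_norm ?y_ge0 ?y_mono.
Qed.
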